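(* Every infinite crowded Tychonoff space $X$ admits a continuous surjection onto an infinite (Tychonoff) homogeneous space of countable weight.
   Context: A space is crowded if it has no isolated points. A space $Y$ is homogeneous if for any $y,z\in Y$ there is a homeomorphism of $Y$ onto itself mapping $y$ to $z$. *)

From HB Require Import structures.
From mathcomp Require Import all_boot all_order all_algebra.
From mathcomp Require Import all_classical all_reals all_analysis.
Set Implicit Arguments. Unset Strict Implicit. Unset Printing Implicit Defensive.
Import Order.TTheory GRing.Theory Num.Theory.
Import numFieldNormedType.Exports.
Local Open Scope classical_set_scope.
Local Open Scope ring_scope.

(* Tychonoff = T1 + completely regular (points and closed sets separated by
   continuous real-valued functions). *)
Definition tychonoff_space (R : realType) (T : topologicalType) : Prop :=
  accessible_space T /\
  forall (a : T) (B : set T), closed B -> ~ B a ->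
    exists f : T -> R, [/\ continuous f, f a = 0 & forall b, B b -> f b = 1].

Definition crowded (T : topologicalType) : Prop :=
  forall x : T, ~ isolated [set: T] x.

Definition homeomorphism (T : topologicalType) (h : T -> T) : Prop :=
  exists g : T -> T, [/\ cancel h g, cancel g h, continuous h & continuous g].

Definition homogeneous (T : topologicalType) : Prop :=
  forall y z : T, exists h : T -> T, homeomorphism h /\ h y = z.

Definition countable_weight (T : topologicalType) : Prop :=
  @second_countable T.

From HB Require Import structures.
From mathcomp Require Import all_boot all_order all_algebra.
From mathcomp Require Import all_classical all_reals all_analysis.
From mathcomp Require Import ring lra.
Set Implicit Arguments. Unset Strict Implicit. Unset Printing Implicit Defensive.
Import Order.TTheory GRing.Theory Num.Theory.
Import numFieldNormedType.Exports.
Local Open Scope classical_set_scope.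

(* If X maps continuously onto the discrete space nat, that is the image.
   Otherwise, if clopen sets separate points from closed sets, then every
   nonempty clopen set splits into two nonempty clopen parts (X is crowded and
   T1), and recording which part a point falls in at each step of the
   splitting is a continuous map to the Cantor space.  It is onto because a
   nested sequence of nonempty clopen sets with nonempty gaps has a common
   point: otherwise the level at which a point leaves the sequence would map
   X continuously onto nat.  Finally, if some point a cannot be clopen-separated
   from a closed set B, a Tychonoff function g with g a = 0 and g = 1 on B
   attains every value of [0, 1] (a missed value c would make {g < c} clopen),
   so x |-> exp (2 pi i g x) maps X onto the circle.  The three targets are
   homogeneous via transpositions, translations and rotations. *)

Lemma accessible_uniform_tychonoff (R : realType) (Y : uniformType) :
  accessible_space Y -> tychonoff_space R Y.
Proof.
move=> accY; split => // a B clB Ba.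
have /(@uniform_separatorP _ R) [f [cf _ f0 f1]] :=
  @uniform_completely_regular R Y a B clB Ba.
exists f; split => //; first by apply: f0; exists a.
by move=> b Bb; apply: f1; exists b.
Qed.

Lemma infinite_setT_inj (T : Type) (f : nat -> T) :
  injective f -> infinite_set [set: T].
Proof.
move=> f_inj finT; apply: infinite_nat.
have := @finite_preimage _ _ [set: T] f (fun x y _ _ => @f_inj x y) finT.
by rewrite preimage_setT.
Qed.

Lemma discrete_continuous (X : discreteTopologicalType) (Y : topologicalType)
  (f : X -> Y) : continuous f.
Proof.
move=> x A /nbhs_singleton Afx /=; rewrite nbhs_simpl.
by apply: filterS (discrete_set1 x) => y ->.
Qed.

Lemma homogeneous_nat : homogeneous nat.
Proof.
move=> y z.
pose h n : nat := if n == y then z else if n == z then y else n.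
have hK : cancel h h.
  move=> n; rewrite /h; case: (eqVneq n y) => [->|ny].
    by rewrite eqxx; case: eqVneq => // ->.
  case: (eqVneq n z) => [->|nz]; first by rewrite eqxx.
  by rewrite (negPf ny) (negPf nz).
exists h; split; last by rewrite /h eqxx.
by exists h; split => //; apply: discrete_continuous.
Qed.

Lemma countable_weight_nat : countable_weight nat.
Proof.
exists (range (fun n : nat => [set n])); first exact: card_image_le.
split; first by move=> _ [n _ <-]; apply: discrete_open.
by move=> x A /nbhs_singleton Ax; exists [set x] => // y ->.
Qed.

Lemma tychonoff_nat (R : realType) : tychonoff_space R nat.
Proof.
by apply/accessible_uniform_tychonoff/hausdorff_accessible/discrete_hausdorff.
Qed.

Lemma cantor_continuous (X : topologicalType) (g : X -> cantor_space) :
  (forall n, continuous (fun x => g x n)) -> continuous g.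
Proof. by move=> cg x; apply/pointwise_cvgP => n; apply: cg. Qed.

Lemma homogeneous_cantor : homogeneous cantor_space.
Proof.
move=> y z.
pose h (c : cantor_space) : cantor_space := fun n => c n (+) (y n (+) z n).
have hK : cancel h h.
  by move=> c; apply/funext => n; rewrite /h -addbA addbb addbF.
have hc : continuous h.
  apply: cantor_continuous => n c.
  apply: (@continuous_comp _ _ _ (fun c : cantor_space => c n)
    (fun b : bool => b (+) (y n (+) z n))).
    exact: (@proj_continuous nat (fun _ => bool) n).
  exact: discrete_continuous.
exists h; split; first by exists h.
by apply/funext => n; rewrite /h addbA addbb.
Qed.

Lemma infinite_cantor : infinite_set [set: cantor_space].
Proof.
apply: (@infinite_setT_inj _ (fun n => (fun k => k == n) : cantor_space)).
by move=> m n /(congr1 (fun c : cantor_space => c n)); rewrite eqxx => /eqP.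
Qed.

Lemma tychonoff_cantor (R : realType) : tychonoff_space R cantor_space.
Proof.
by apply/accessible_uniform_tychonoff/hausdorff_accessible/cantor_space_hausdorff.
Qed.

(* [compact_second_countable] is stated for pointed pseudometric spaces. *)
HB.instance Definition _ :=
  isPointed.Build (prod_topology (fun _ : nat => bool)) (fun _ => false).

Lemma countable_weight_cantor (R : realType) : countable_weight cantor_space.
Proof.
exact: (@compact_second_countable R (prod_topology (fun _ : nat => bool))
  cantor_space_compact).
Qed.

Definition maps_onto_nat (X : topologicalType) : Prop :=
  exists h : X -> nat, continuous h /\ forall n, exists x, h x = n.

Definition clopen_separated (X : topologicalType) : Prop :=
  forall (a : X) (B : set X), closed B -> ~ B a ->
    exists U, [/\ clopen U, U a & forall b, B b -> ~ U b].

Lemma nested_clopen_meet (X : topologicalType) (W : nat -> set X) :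
  ~ maps_onto_nat X -> W 0 = setT -> (forall n, clopen (W n)) ->
  (forall n, W n.+1 `<=` W n) -> (forall n, W n `\` W n.+1 !=set0) ->
  exists x, forall n, W n x.
Proof.
move=> no_nat W0 clW decrW gapW; apply: contrapT => no_meet.
have W_le i j : i <= j -> W j `<=` W i.
  elim: j => [|j IH]; first by rewrite leqn0 => /eqP ->.
  by rewrite leq_eqVlt ltnS => /orP[/eqP -> //|/IH Wji] x /decrW /Wji.
have exit x : exists k, W k x /\ ~ W k.+1 x.
  have [n Wnx] : exists n, ~ W n x.
    apply: contrapT => all_W; apply: no_meet; exists x => n.
    by apply: contrapT => Wnx; apply: all_W; exists n.
  elim: n Wnx => [|n IH Wnx]; first by rewrite W0 => /(_ I).
  by have [Wx|] := pselect (W n x); [exists n | exact: IH].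
pose h x := projT1 (cid (exit x)).
have exit_h k x : W k x -> ~ W k.+1 x -> h x = k.
  rewrite /h; case: cid => /= l [Wl Wl1] Wk Wk1.
  case: (ltngtP l k) => // lk; exfalso.
  - exact/Wl1/(W_le _ _ lk).
  - exact/Wk1/(W_le _ _ lk).
apply: no_nat; exists h; split.
  move=> x; apply/discrete_cvg; rewrite /h; case: cid => /= k [Wk Wk1].
  have [[oWk _] [_ cWk1]] := (clW k, clW k.+1).
  have oD : open (W k `\` W k.+1) by rewrite setDE; apply: openI; rewrite ?openC.
  apply: filterS (open_nbhs_nbhs (conj oD (conj Wk Wk1))) => y [].
  exact: exit_h.
by move=> k; have [x [Wk Wk1]] := gapW k; exists x; apply: exit_h.
Qed.

Section CantorCode.
Variable X : topologicalType.
Hypotheses (sepX : clopen_separated X) (crX : crowded X) (accX : accessible_space X).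

Definition clopen_split (V W : set X) : Prop :=
  [/\ clopen W, W `<=` V, W !=set0 & V `\` W !=set0].

Lemma clopen_split_ex (V : set X) : clopen V -> V !=set0 ->
  exists W, clopen_split V W.
Proof.
move=> clV [x Vx].
have [y [Vy yx]] : exists y, V y /\ y != x.
  apply: contrapT => V1; apply: (@crX x); split; first by rewrite inE.
  exists V; first by apply: open_nbhs_nbhs; split => //; case: clV.
  apply/seteqP; split => [y [Vy _]|y ->] //.
  by apply: contrapT => yx; apply: V1; exists y; split => //; apply/eqP.
have cl_y : closed [set y] := @accessible_closed_set1 X (@accX) y.
have [U [clU Ux Uy]] := @sepX x [set y] cl_y (nesym (elimN eqP yx)).
exists (V `&` U); split.
- exact: clopenI.
- exact: subIsetl.
- by exists x.
- by exists y; split => // -[_]; apply: Uy.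
Qed.

Definition left_part (V : set X) : set X := xget set0 (clopen_split V).

Definition child (V : set X) (b : bool) : set X :=
  if b then left_part V else V `\` left_part V.

Lemma child_clopen_split V b : clopen V -> V !=set0 ->
  [/\ clopen (child V b), child V b !=set0 & child V b `<=` V].
Proof.
move=> clV V0; have [W splitW] := clopen_split_ex clV V0.
have [clW WV W0 VW0] := xgetI set0 splitW.
case: b; split => //.
- by rewrite /= setDE; apply: clopenI => //; apply: clopenC.
- exact: subDsetl.
Qed.

Lemma child_mem (V : set X) b x : child V b x -> `[< left_part V x >] = b.
Proof. by case: b => /= [Lx|[_ Lx]]; apply/asboolP. Qed.

Lemma mem_child (V : set X) x : V x -> child V `[< left_part V x >] x.
Proof. by move=> Vx; case: asboolP. Qed.

Fixpoint cell (x : X) (n : nat) : set X :=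
  if n is m.+1 then child (cell x m) `[< left_part (cell x m) x >] else setT.

Definition cantor_code (x : X) : cantor_space :=
  fun n => `[< left_part (cell x n) x >].

Lemma cellS x n : cell x n.+1 = child (cell x n) (cantor_code x n).
Proof. by []. Qed.

Lemma cell_mem x n : cell x n x.
Proof. by elim: n => // n; rewrite cellS; apply: mem_child. Qed.

Lemma cell_clopen x n : clopen (cell x n).
Proof.
elim: n => [|n IH]; first exact: clopenT.
by have [] := child_clopen_split (cantor_code x n) IH (ex_intro _ x (cell_mem x n)).
Qed.

Lemma cell_sub x n : cell x n.+1 `<=` cell x n.
Proof.
by have [] := child_clopen_split (cantor_code x n) (cell_clopen x n)
  (ex_intro _ x (cell_mem x n)).
Qed.

Lemma cell_eq x y n : cell x n y -> cell y n = cell x n.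
Proof.
elim: n => [//|n IH] xy.
rewrite !cellS /cantor_code (IH (cell_sub xy)).
by rewrite cellS in xy; rewrite (child_mem xy).
Qed.

Lemma cantor_code_eq x y n : cell x n.+1 y -> cantor_code y n = cantor_code x n.
Proof.
move=> xy; rewrite {1}/cantor_code (cell_eq (cell_sub xy)).
by rewrite cellS in xy; rewrite (child_mem xy).
Qed.

Lemma continuous_cantor_code : continuous cantor_code.
Proof.
apply: cantor_continuous => n x; apply/discrete_cvg.
have [oV _] := cell_clopen x n.+1.
apply: filterS (open_nbhs_nbhs (conj oV (cell_mem x n.+1))) => y.
exact: cantor_code_eq.
Qed.

Fixpoint branch (s : cantor_space) (n : nat) : set X :=
  if n is m.+1 then child (branch s m) (s m) else setT.

Section Branch.
Variables (x0 : X) (s : cantor_space).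

Lemma branch_clopen_split n :
  [/\ clopen (branch s n), branch s n !=set0 & branch s n.+1 `<=` branch s n].
Proof.
elim: n => [|n [clB B0 _]].
  have [] := child_clopen_split (s 0) clopenT (ex_intro _ x0 I).
  by split => //; [exact: clopenT | exists x0].
have [clC C0 CB] := child_clopen_split (s n) clB B0; split => //.
by have [] := child_clopen_split (s n.+1) clC C0.
Qed.

Lemma branch_gap n : branch s n `\` branch s n.+1 !=set0.
Proof.
have [clB B0 _] := branch_clopen_split n.
have [clC C0 CB] := child_clopen_split (~~ s n) clB B0.
have [y Cy] := C0; exists y; split; first exact: CB.
by move=> /= /child_mem; move: Cy => /child_mem ->; case: (s n).
Qed.

Lemma cantor_code_onto : ~ maps_onto_nat X -> exists x, cantor_code x = s.
Proof.
move=> no_nat.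
have [x xB] : exists x, forall n, branch s n x.
  apply: nested_clopen_meet => //; last exact: branch_gap.
  - by move=> n; case: (branch_clopen_split n).
  - by move=> n; case: (branch_clopen_split n).
have code_x n : cell x n = branch s n -> cantor_code x n = s n.
  by move=> e; have := xB n.+1; rewrite /= -e => /child_mem.
have cell_x n : cell x n = branch s n.
  by elim: n => //= n e; rewrite -/(cantor_code x n) code_x e.
by exists x; apply/funext => n; apply: code_x.
Qed.

End Branch.
End CantorCode.

Local Open Scope ring_scope.

Section Circle.
Variable R : realType.

Definition unit_circle := {p : R * R | p.1 ^+ 2 + p.2 ^+ 2 == 1}.

Definition expi_point (t : R) : unit_circle :=
  exist _ (cos t, sin t) (introT eqP (cos2Dsin2 t)).

Definition circle : Type := initial_topology (val : unit_circle -> R * R).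
HB.instance Definition _ := Choice.on circle.
HB.instance Definition _ := isPointed.Build circle (expi_point 0).
HB.instance Definition _ := Topological.on circle.
HB.instance Definition _ := Uniform.on circle.
HB.instance Definition _ := PseudoMetric.on circle.

Definition expi (t : R) : circle := expi_point t.

Lemma continuous_expi : continuous expi.
Proof.
apply: (@continuous_comp_initial unit_circle) => t /=.
exact: (cvg_pair (@continuous_cos R t) (@continuous_sin R t)).
Qed.

Lemma expi_onto (p : circle) : exists t, 0 <= t <= pi *+ 2 /\ expi t = p.
Proof.
case: p => -[u v] /[dup] /eqP /= huv p_circ.
have u1 : -1 <= u <= 1 by apply/andP; split; nra.
have pi0 := pi_ge0 R.
have /andP[acos0 acospi] : 0 <= acos u <= pi by rewrite acos_ge0 // acos_lepi.
have cos_acos : cos (acos u) = u by rewrite acosK // in_itv /=.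
have sin_acos : sin (acos u) = `|v|.
  by rewrite sin_acos // -sqrtr_sqr; congr Num.sqrt; lra.
have [v0|v0] := lerP 0 v.
  exists (acos u); split; first by apply/andP; split; lra.
  by apply: val_inj => /=; rewrite cos_acos sin_acos ger0_norm.
exists (pi *+ 2 - acos u); split; first by apply/andP; split; lra.
apply: val_inj => /=; rewrite cosB sinB cos2pi sin2pi cos_acos sin_acos.
by rewrite ltr0_norm //; congr pair; ring.
Qed.

Definition rotate (a b : R) (q : R * R) : R * R :=
  (a * q.1 - b * q.2, b * q.1 + a * q.2).

Lemma rotate_norm a b q :
  (rotate a b q).1 ^+ 2 + (rotate a b q).2 ^+ 2 =
  (a ^+ 2 + b ^+ 2) * (q.1 ^+ 2 + q.2 ^+ 2).
Proof. by rewrite /rotate /=; ring. Qed.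

Lemma rotateK a b : a ^+ 2 + b ^+ 2 = 1 -> cancel (rotate a b) (rotate a (- b)).
Proof.
move=> ab1 [u v]; rewrite /rotate /=; congr pair.
  by transitivity ((a ^+ 2 + b ^+ 2) * u); [ring | rewrite ab1 mul1r].
by transitivity ((a ^+ 2 + b ^+ 2) * v); [ring | rewrite ab1 mul1r].
Qed.

Lemma continuous_rotate a b : continuous (rotate a b).
Proof.
move=> q; apply: (@cvg_pair (R * R)%type R R (nbhs q) (nbhs (rotate a b q).1)
  (nbhs (rotate a b q).2) _ _ _ (fun q => a * q.1 - b * q.2)
  (fun q => b * q.1 + a * q.2)).
  by apply: cvgB; apply: cvgM; [exact: cvg_cst|exact: cvg_fst|exact: cvg_cst|exact: cvg_snd].
by apply: cvgD; apply: cvgM; [exact: cvg_cst|exact: cvg_fst|exact: cvg_cst|exact: cvg_snd].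
Qed.

Definition rotation (a b : R) (p : circle) : circle := insubd p (rotate a b (val p)).

Lemma val_rotation a b p :
  a ^+ 2 + b ^+ 2 = 1 -> val (rotation a b p) = rotate a b (val p).
Proof.
move=> ab1; rewrite insubdK //; apply/eqP.
by rewrite rotate_norm ab1 mul1r; apply/eqP/(valP p).
Qed.

Lemma rotationK a b : a ^+ 2 + b ^+ 2 = 1 -> cancel (rotation a b) (rotation a (- b)).
Proof.
move=> ab1 p; have ab1' : a ^+ 2 + (- b) ^+ 2 = 1 by rewrite sqrrN.
by apply: val_inj; rewrite !val_rotation // rotateK.
Qed.

Lemma continuous_rotation a b : a ^+ 2 + b ^+ 2 = 1 -> continuous (rotation a b).
Proof.
move=> ab1; apply: (@continuous_comp_initial unit_circle) => p.
have -> : val \o rotation a b = rotate a b \o (val : circle -> R * R).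
  by apply/funext => q /=; rewrite val_rotation.
apply: continuous_comp; [exact: initial_continuous | exact: continuous_rotate].
Qed.

Lemma homogeneous_circle : homogeneous circle.
Proof.
move=> [[y1 y2] /[dup] /eqP /= y_circ ?] [[z1 z2] /[dup] /eqP /= z_circ ?].
(* [a] and [b] are the cosine and sine of the angle from [y] to [z]. *)
pose a := z1 * y1 + z2 * y2; pose b := z2 * y1 - z1 * y2.
have ab1 : a ^+ 2 + b ^+ 2 = 1.
  by transitivity ((z1 ^+ 2 + z2 ^+ 2) * (y1 ^+ 2 + y2 ^+ 2));
    [rewrite /a /b; ring | rewrite y_circ z_circ mulr1].
have ab1' : a ^+ 2 + (- b) ^+ 2 = 1 by rewrite sqrrN.
exists (rotation a b); split.
  exists (rotation a (- b)); split; [exact: rotationK | | exact: continuous_rotation..].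
  by have := rotationK ab1'; rewrite opprK.
apply: val_inj; rewrite val_rotation //= /rotate /=; congr pair.
  by transitivity (z1 * (y1 ^+ 2 + y2 ^+ 2)); [rewrite /a /b; ring | rewrite y_circ mulr1].
by transitivity (z2 * (y1 ^+ 2 + y2 ^+ 2)); [rewrite /a /b; ring | rewrite y_circ mulr1].
Qed.

Lemma accessible_circle : accessible_space circle.
Proof.
move=> p q pq.
have /(hausdorff_accessible (@norm_hausdorff _ (R * R)%type)) [A [oA pA qA]] :
  val p != val q by apply: contra pq => /eqP /val_inj ->.
exists (val @^-1` A); split => //.
exact: open_comp (fun r _ => @initial_continuous _ _ val r) oA.
Qed.

Lemma tychonoff_circle : tychonoff_space R circle.
Proof. exact/accessible_uniform_tychonoff/accessible_circle. Qed.

Lemma compact_circle : compact [set: circle].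
Proof.
have -> : [set: circle] = expi @` `[0, pi *+ 2].
  apply/seteqP; split => // p _.
  by have [t [t02 <-]] := expi_onto p; exists t.
apply: continuous_compact; last exact: segment_compact.
exact/continuous_subspaceT/continuous_expi.
Qed.

Lemma countable_weight_circle : countable_weight circle.
Proof. exact: (@compact_second_countable R circle compact_circle). Qed.

Lemma infinite_circle : infinite_set [set: circle].
Proof.
pose u (n : nat) : R := n.+1%:R^-1.
have u_circ n : (u n, Num.sqrt (1 - u n ^+ 2)).1 ^+ 2
                + (u n, Num.sqrt (1 - u n ^+ 2)).2 ^+ 2 == 1.
  have u0 : 0 <= u n by rewrite /u invr_ge0.
  have u1 : u n <= 1 by rewrite /u invf_le1 // ler1n.
  by rewrite /= sqr_sqrtr; [rewrite addrC subrK | nra].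
pose g n : circle := exist _ (u n, Num.sqrt (1 - u n ^+ 2)) (u_circ n).
apply: (@infinite_setT_inj _ g).
move=> m n /(congr1 (fun p : circle => (val p).1)) /=.
by move/invr_inj/eqP; rewrite eqr_nat eqSS => /eqP.
Qed.

End Circle.

Lemma not_clopen_separated (X : topologicalType) : ~ clopen_separated X ->
  exists (a : X) (B : set X),
    [/\ closed B, ~ B a & forall U, clopen U -> U a -> exists2 b, U b & B b].
Proof.
move=> not_sep; apply: contrapT => no_ab; apply: not_sep => a B clB Ba.
apply: contrapT => no_U; apply: no_ab; exists a, B; split => // U clU Ua.
apply: contrapT => UB; apply: no_U; exists U; split => // b Bb Ub.
by apply: UB; exists b.
Qed.

Lemma unit_interval_in_image (R : realType) (X : topologicalType) (g : X -> R) (a : X) :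
  continuous g -> g a = 0 ->
  (forall U, clopen U -> U a -> exists2 x, U x & g x = 1) ->
  forall c, 0 <= c <= 1 -> exists x, g x = c.
Proof.
move=> cg ga meet1 c /andP[c0 c1]; apply: contrapT => c_notin.
pose U := g @^-1` [set r | r < c].
have UE : U = g @^-1` [set r | r <= c].
  apply/seteqP; split => x /=; first exact: ltW.
  by rewrite le_eqVlt => /orP[/eqP gx|//]; exfalso; apply: c_notin; exists x.
have clU : clopen U.
  split; first exact: open_comp (fun x _ => cg x) (@open_lt R c).
  by rewrite UE; exact: preimage_closed (fun x _ => cg x) (@closed_le R c).
have Ua : U a.
  rewrite /U /= ga lt_neqAle c0 andbT eq_sym; apply/eqP => c_0.
  by apply: c_notin; exists a; rewrite ga c_0.
have [x Ux gx] := meet1 U clU Ua.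
by move: Ux; rewrite /U /= gx => ?; lra.
Qed.

Lemma expi_comp_onto (R : realType) (X : topologicalType) (g : X -> R) :
  continuous g -> (forall c, 0 <= c <= 1 -> exists x, g x = c) ->
  continuous (fun x => expi (pi *+ 2 * g x)) /\
  forall p : circle R, exists x, expi (pi *+ 2 * g x) = p.
Proof.
move=> cg g01; have pi2_gt0 : (0 : R) < pi *+ 2 by rewrite mulrn_wgt0 // pi_gt0.
split.
  move=> x; apply: continuous_comp; last exact: continuous_expi.
  by apply: cvgM; [exact: cvg_cst | exact: cg].
move=> p; have [t [/andP[t0 t2pi] <-]] := expi_onto p.
have [|x gx] := g01 (t / (pi *+ 2)).
  apply/andP; split; first by rewrite divr_ge0 // ltW.
  by rewrite ler_pdivrMr // mul1r.
by exists x; rewrite gx mulrC divfK // gt_eqF.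
Qed.

Theorem mainTheorem2 (R : realType) (X : topologicalType) :
  infinite_set [set: X] -> crowded X -> tychonoff_space R X ->
  exists (Y : topologicalType) (f : X -> Y),
    [/\ continuous f & (forall y : Y, exists x : X, f x = y)] /\
    [/\ infinite_set [set: Y], tychonoff_space R Y,
        homogeneous Y & countable_weight Y].
Proof.
move=> infX crX [accX sepX].
have [[h [ch h_onto]]|no_nat] := pselect (maps_onto_nat X).
  exists nat, h; split => //.
  by split; [exact: infinite_nat | exact: tychonoff_nat | exact: homogeneous_nat
    | exact: countable_weight_nat].
have [clsepX|/not_clopen_separated [a [B [clB Ba meetB]]]] :=
  pselect (clopen_separated X).
  have [x0 _] := infinite_setN0 infX.
  exists cantor_space, (@cantor_code X); split.
    split; first exact: continuous_cantor_code.
    by move=> s; apply: cantor_code_onto.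
  by split; [exact: infinite_cantor | exact: tychonoff_cantor
    | exact: homogeneous_cantor | exact: countable_weight_cantor R].
have [g [cg ga gB]] := sepX a B clB Ba.
have g01 : forall c, 0 <= c <= 1 -> exists x, g x = c.
  apply: unit_interval_in_image cg ga _ => U clU Ua.
  by have [b Ub Bb] := meetB U clU Ua; exists b; rewrite ?gB.
have [cf f_onto] := expi_comp_onto cg g01.
exists (circle R), (fun x => expi (pi *+ 2 * g x)); split => //.
by split; [exact: infinite_circle | exact: tychonoff_circle
  | exact: homogeneous_circle | exact: countable_weight_circle].
Qed.
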